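(* For every $n\ge 0$, the number $b(n)$ of non-squashing partitions of $n$ into distinct parts equals the number of partitions of $n$ into powers of $2$ such that either all parts are equal to $1$, or the largest part is $2^i>1$ and there is at least one part equal to $2^{i-1}$.
   Context: A partition $n=p_1+\cdots+p_k$ with $1\le p_1\le\cdots\le p_k$ is non-squashing if $p_1+\cdots+p_j\le p_{j+1}$ for all $1\le j\le k-1$. The empty partition of $0$ counts (vacuously) in both families. *)

From mathcomp Require Import all_boot.
Set Implicit Arguments. Unset Strict Implicit. Unset Printing Implicit Defensive.

Definition is_partition (n : nat) (s : seq nat) : bool :=
  [&& sorted leq s, all (fun p => 0 < p) s & sumn s == n].

(* Non-squashing: p_1 + ... + p_j <= p_{j+1} for all 1 <= j <= k-1
   (0-based: sumn (take j s) <= nth 0 s j for 1 <= j < size s). *)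
Definition non_squashing (s : seq nat) : bool :=
  all (fun j => sumn (take j s) <= nth 0 s j) (iota 1 (size s).-1).

Definition ns_distinct (n : nat) (s : seq nat) : bool :=
  [&& is_partition n s, uniq s & non_squashing s].

Definition is_pow2 (x : nat) : bool := has (fun i => x == 2 ^ i) (iota 0 x.+1).

Definition pow2_special (n : nat) (s : seq nat) : bool :=
  [&& is_partition n s, all is_pow2 s &
      all (fun p => p == 1) s ||
      has (fun i => (last 0 s == 2 ^ i.+1) && (2 ^ i \in s)) (iota 0 n)].

Fixpoint all_seqs (k m : nat) : seq (seq nat) :=
  if k is k'.+1 then [seq x :: t | x <- iota 0 m, t <- all_seqs k' m]
  else [:: [::]].

(* A duplicate-free finite list containing every partition of n
   (parts are <= n and there are at most n of them). *)
Definition candidates (n : nat) : seq (seq nat) :=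
  flatten [seq all_seqs k n.+1 | k <- iota 0 n.+1].

Definition num_partitions (P : nat -> seq nat -> bool) (n : nat) : nat :=
  count (P n) (candidates n).

Definition b (n : nat) : nat := num_partitions ns_distinct n.

From mathcomp Require Import all_boot zify.

(* Both counts equal 1 at n = 0 and satisfy, for n > 0,
     x(n) = x(0) + x(1) + ... + x(n/2) - [n is even].
   A non-squashing partition of n into distinct parts is a non-squashing
   partition of some m <= n/2 followed by the part n - m; the only failure of
   distinctness is [m; m] when n = 2m.  A special partition of n into powers
   of 2 is k ones followed by the doubles of a special partition t of
   m = (n - k)/2; the only failure of the condition on the largest part is
   t = [1; ...; 1] with k = 0, when n = 2m. *)

Set Implicit Arguments.
Unset Strict Implicit.
Unset Printing Implicit Defensive.

(** * Enumerating partitions *)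

Lemma mem_all_seqs k m s :
  (s \in all_seqs k m) = (size s == k) && all (fun x => x < m) s.
Proof.
elim: k s => [|k IH] [|x s] //=; first by apply/allpairsPdep => -[y [t [_ _]]].
apply/allpairsPdep/andP => [[y [t [y_lt t_in [-> ->]]]]|[size_s /andP[x_lt s_lt]]].
  by move: t_in y_lt; rewrite IH mem_iota => /andP[/eqP -> ->] /andP[_ ->].
by exists x, s; rewrite mem_iota IH -eqSS size_s.
Qed.

Lemma uniq_all_seqs k m : uniq (all_seqs k m).
Proof.
elim: k => [|k IH] //=; apply: allpairs_uniq => //; first exact: iota_uniq.
by move=> [x s] [y t] _ _ /= [-> ->].
Qed.

Lemma mem_candidates n s :
  (s \in candidates n) = (size s <= n) && all (fun x => x <= n) s.
Proof.
apply/flatten_mapP/andP => [[k]|[size_s s_le]].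
  by rewrite mem_iota ltnS mem_all_seqs => k_le /andP[/eqP -> ->].
by exists (size s); rewrite ?mem_iota ?mem_all_seqs ?eqxx.
Qed.

Lemma uniq_flatten_map (S T : eqType) (key : T -> S) (F : S -> seq T) (ks : seq S) :
  uniq ks -> (forall k, uniq (F k)) -> (forall k x, x \in F k -> key x = k) ->
  uniq (flatten (map F ks)).
Proof.
move=> + uniq_F key_F; elim: ks => [|k ks IH] //= /andP[k_ks /IH uniq_ks].
rewrite cat_uniq uniq_F uniq_ks andbT; apply/hasP => -[x /flatten_mapP[j j_ks x_j] x_k].
by move: k_ks; rewrite -(key_F _ _ x_k) (key_F _ _ x_j) j_ks.
Qed.

Lemma uniq_candidates n : uniq (candidates n).
Proof.
rewrite /candidates; apply: (@uniq_flatten_map _ _ size (all_seqs^~ n.+1)) => [|k|k s].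
- exact: iota_uniq.
- exact: uniq_all_seqs.
- by rewrite mem_all_seqs => /andP[/eqP].
Qed.

Lemma mem_leq_sumn x s : x \in s -> x <= sumn s.
Proof. by elim: s => //= y s IH; rewrite in_cons => /predU1P[->|/IH]; lia. Qed.

Lemma size_leq_sumn s : all (fun p => 0 < p) s -> size s <= sumn s.
Proof. by elim: s => //= y s IH /andP[y_gt0 /IH]; lia. Qed.

Lemma partition_candidates n s : is_partition n s -> s \in candidates n.
Proof.
case/and3P=> _ s_gt0 /eqP <-; rewrite mem_candidates size_leq_sumn //=.
by apply/allP => x /mem_leq_sumn.
Qed.

Lemma num_partitions_enum (P : nat -> seq nat -> bool) n (l : seq (seq nat)) :
  (forall s, P n s -> is_partition n s) -> uniq l -> l =i P n ->
  num_partitions P n = size l.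
Proof.
move=> P_part uniq_l mem_l; rewrite /num_partitions -size_filter.
apply/perm_size/uniq_perm; rewrite ?filter_uniq ?uniq_candidates // => s.
by rewrite mem_filter mem_l andb_idr // => /P_part/partition_candidates.
Qed.

Section HalvingRecurrence.

Variables (P : nat -> seq nat -> bool) (n : nat).
Variables (glue : seq nat -> seq nat) (excl : seq nat).

Hypothesis P_partition : forall {m s}, P m s -> is_partition m s.
Hypothesis P_excl : ~~ odd n -> P n./2 excl.
Hypothesis glue_inj : injective glue.
Hypothesis P_glue : forall r, (sumn r).*2 <= n -> P (sumn r) r ->
  ((sumn r).*2 < n) || (r != excl) -> P n (glue r).
Hypothesis P_unglue : forall s, P n s -> exists2 r,
  [&& (sumn r).*2 <= n, P (sumn r) r & ((sumn r).*2 < n) || (r != excl)] & s = glue r.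

Let lower := flatten [seq filter (P m) (candidates m) | m <- iota 0 n./2.+1].

Let mem_lower r : (r \in lower) = ((sumn r).*2 <= n) && P (sumn r) r.
Proof.
apply/flatten_mapP/andP => [[m]|[r_le Pr]].
  rewrite mem_iota leq0n add0n ltnS geq_half_double mem_filter => m_le /andP[Pr _].
  by have /and3P[_ _ /eqP ->] := P_partition Pr.
exists (sumn r); first by rewrite mem_iota leq0n add0n ltnS geq_half_double.
by rewrite mem_filter Pr partition_candidates ?P_partition.
Qed.

Let uniq_lower : uniq lower.
Proof.
rewrite /lower; apply: (@uniq_flatten_map _ _ sumn (fun m => filter (P m) (candidates m))).
- exact: iota_uniq.
- by move=> m; rewrite filter_uniq ?uniq_candidates.
- by move=> m r; rewrite mem_filter => /andP[/P_partition/and3P[_ _ /eqP]].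
Qed.

Lemma num_partitions_halving :
  num_partitions P n = \sum_(m < n./2.+1) num_partitions P m - ~~ odd n.
Proof.
pose keep r := ((sumn r).*2 < n) || (r != excl).
have -> : num_partitions P n = count keep lower.
  rewrite -size_filter -(size_map glue); apply: num_partitions_enum => [s /P_partition //||].
    by rewrite map_inj_uniq ?filter_uniq.
  move=> s; apply/mapP/idP => [[r]|/P_unglue[r /and3P[r_le Pr keep_r] ->]].
    by rewrite mem_filter mem_lower => /andP[keep_r /andP[r_le Pr]] ->; apply: P_glue.
  by exists r; rewrite // mem_filter mem_lower r_le Pr !andbT.
have size_lower : size lower = \sum_(m < n./2.+1) num_partitions P m.
  rewrite size_flatten /shape -map_comp sumnE big_map -(big_mkord xpredT).
  by rewrite /index_iota subn0; apply: eq_bigr => m _; exact: size_filter.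
have drop_excl : count (predC keep) lower = ~~ odd n.
  have [n_odd|n_even] := boolP (odd n).
    apply/eqP; rewrite eqn0Ngt -has_count; apply/hasP => -[r].
    rewrite mem_lower /= negb_or negbK => /andP[r_le _] /andP[r_ge _].
    have /eqP r_half : (sumn r).*2 == n by rewrite eqn_leq r_le leqNgt.
    by move: n_odd; rewrite -r_half odd_double.
  have /and3P[_ _ /eqP sum_excl] := P_partition (P_excl n_even).
  have double_half : (n./2).*2 = n by rewrite halfK (negbTE n_even) subn0.
  rewrite (@eq_in_count _ _ (pred1 excl)) => [|r]; last first.
    move=> _; rewrite /= negb_or negbK.
    by case: eqP => [->|]; rewrite ?andbF // sum_excl double_half ltnn.
  by rewrite count_uniq_mem // mem_lower sum_excl double_half leqnn P_excl.
by rewrite -size_lower -(count_predC keep) drop_excl addnK.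
Qed.

End HalvingRecurrence.

(** * Non-squashing partitions into distinct parts *)

Lemma sumn_mem_seq1 r x :
  all (fun p => 0 < p) r -> x \in r -> sumn r = x -> r = [:: x].
Proof.
case: r => [|y r] //= /andP[y_gt0 r_gt0]; rewrite in_cons => /predU1P[->|x_r].
  by case: r r_gt0 => [|z r] //= /andP[z_gt0 _]; lia.
by have := mem_leq_sumn x_r; lia.
Qed.

Lemma last_leq_sumn r : last 0 r <= sumn r.
Proof. by case/lastP: r => [|r x] //; rewrite last_rcons sumn_rcons leq_addl. Qed.

Lemma non_squashing_rcons r p :
  non_squashing (rcons r p) = non_squashing r && (sumn r <= p).
Proof.
rewrite /non_squashing size_rcons /=.
have [/eqP/nilP -> //|r_gt0] := posnP (size r).
rewrite -{1}(prednK r_gt0) -[(size r).-1.+1]addn1 iotaD all_cat /= andbT.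
rewrite add1n prednK //.
congr andb; last by rewrite -cats1 take_size_cat // nth_cat ltnn subnn.
apply: eq_in_all => j; rewrite mem_iota => /andP[_ j_lt].
have {}j_lt : j < size r by lia.
by rewrite -cats1 takel_cat ?nth_cat ?j_lt // ltnW.
Qed.

Lemma sorted_leq_rcons r p : sorted leq (rcons r p) = sorted leq r && (last 0 r <= p).
Proof. by case: r => //= x r; rewrite rcons_path. Qed.

Lemma ns_distinct_rcons r p :
  ns_distinct (sumn r + p) (rcons r p) =
  [&& ns_distinct (sumn r) r, sumn r <= p, 0 < p & p \notin r].
Proof.
rewrite /ns_distinct /is_partition sorted_leq_rcons all_rcons sumn_rcons rcons_uniq.
rewrite non_squashing_rcons !eqxx.
case: (leqP (sumn r) p) => [r_le|]; last by rewrite !andbF.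
rewrite (leq_trans (last_leq_sumn r) r_le).
by case: (0 < p); case: (p \in r); rewrite /= ?andbF ?andbT // -!andbA.
Qed.

Lemma b_rec n : 0 < n -> b n = \sum_(m < n./2.+1) b m - ~~ odd n.
Proof.
move=> n_gt0; apply: (num_partitions_halving (glue := fun r => rcons r (n - sumn r))
                                             (excl := [:: n./2])).
- by move=> m s /and3P[].
- by move=> n_even; rewrite /ns_distinct /is_partition /non_squashing /= addn0 eqxx andbT; lia.
- by move=> r r' /rcons_inj[].
- move=> r r_le Pr keep_r; have /and3P[/and3P[_ r_gt0 _] _ _] := Pr.
  have sum_le : sumn r <= n by lia.
  rewrite -{1}(subnKC sum_le) ns_distinct_rcons Pr /=; apply/and3P; split; try lia.
  apply/negP => new_r; have new_le := mem_leq_sumn new_r.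
  have r_half : n - sumn r = n./2 by lia.
  have r1 : r = [:: n./2] by rewrite -r_half; apply: sumn_mem_seq1 => //; lia.
  by move: keep_r; rewrite r1 eqxx orbF /=; lia.
- case/lastP => [/and3P[/and3P[_ _ /eqP n0]]|r p ns_s]; first by rewrite -n0 in n_gt0.
  have /and3P[/and3P[_ _ /eqP]] := ns_s; rewrite sumn_rcons => sum_s _ _.
  move: ns_s; rewrite -sum_s ns_distinct_rcons => /and4P[Pr r_le p_gt0 p_r].
  exists r; last by rewrite addKn.
  apply/and3P; split => //; first lia.
  rewrite ltnNge -negb_and; apply/negP => /andP[n_le /eqP r1].
  have p_half : p = (sumn r + p)./2 by lia.
  by move: p_r; rewrite {1}r1 -p_half mem_seq1 eqxx.
Qed.

(** * Partitions into powers of 2 *)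

Lemma sorted_leq_last s x : sorted leq s -> x \in s -> x <= last 0 s.
Proof.
move=> s_sorted x_s; rewrite -(nth_index 0 x_s) -nth_last.
have i_lt : index x s < size s by rewrite index_mem.
by apply: (sorted_leq_nth leq_trans leqnn); rewrite ?inE /=; lia.
Qed.

Lemma all_ones_last s : sorted leq s -> all (fun p => 0 < p) s ->
  all (pred1 1) s = (last 0 s <= 1).
Proof.
move=> s_sorted s_gt0; apply/allP/idP => [s_ones|last_le x x_s].
  by move: (mem_last 0 s); rewrite in_cons => /predU1P[-> //|/s_ones /eqP ->].
by rewrite /= eqn_leq (leq_trans (sorted_leq_last s_sorted x_s)) //= (allP s_gt0).
Qed.

Lemma partition_ones m t : is_partition m t -> (t == nseq m 1) = (last 0 t <= 1).
Proof.
case/and3P=> t_sorted t_gt0 /eqP t_sum; rewrite -all_ones_last //.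
apply/eqP/idP => [->|/all_pred1P t_ones]; first exact: all_pred1_nseq.
by rewrite -t_sum t_ones sumn_nseq mul1n.
Qed.

Lemma is_pow2P x : reflect (exists i, x = 2 ^ i) (is_pow2 x).
Proof.
apply: (iffP hasP) => [[i _ /eqP ->]|[i x_pow]]; first by exists i.
exists i; last by rewrite x_pow.
by rewrite mem_iota add0n ltnS x_pow leq0n ltnW // ltn_expl.
Qed.

Lemma is_pow2_double x : is_pow2 x.*2 = is_pow2 x.
Proof.
apply/is_pow2P/is_pow2P => -[i x_pow]; last by exists i.+1; rewrite x_pow expnS mul2n.
case: i x_pow => [/(congr1 odd)|i]; first by rewrite odd_double.
by rewrite expnS mul2n => /double_inj ->; exists i.
Qed.

Lemma is_pow2_even x : is_pow2 x -> 1 < x -> ~~ odd x.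
Proof. by case/is_pow2P => -[|i] ->; rewrite ?oddX. Qed.

Definition top_halved (s : seq nat) : bool := (last 0 s <= 1) || ((last 0 s)./2 \in s).

Lemma pow2_specialE n s :
  pow2_special n s = [&& is_partition n s, all is_pow2 s & top_halved s].
Proof.
rewrite /pow2_special; case s_part: (is_partition n s) => //=.
case s_pow2: (all is_pow2 s) => //=.
have /and3P[s_sorted s_gt0 /eqP s_sum] := s_part.
rewrite all_ones_last //; apply: orb_id2l; rewrite -ltnNge => last_gt1.
have last_s : last 0 s \in s.
  by move: (mem_last 0 s); rewrite in_cons => /predU1P[last0|//]; rewrite last0 in last_gt1.
have /is_pow2P[[|i] last_pow] := allP s_pow2 _ last_s; first by rewrite last_pow in last_gt1.
rewrite last_pow {2}expnS mul2n doubleK.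
apply/hasP/idP => [[j _ /andP[]]|i_s]; first by rewrite eqn_exp2l // eqSS => /eqP <-.
exists i; last by rewrite eqxx.
have := mem_leq_sumn last_s; rewrite last_pow s_sum => pow_le.
have := ltn_expl i (ltnSn 1); have := ltn_exp2l i i.+1 (ltnSn 1).
rewrite mem_iota; lia.
Qed.

Lemma sumn_map_double t : sumn (map double t) = (sumn t).*2.
Proof. by elim: t => //= x t ->; rewrite doubleD. Qed.

Lemma sorted_ones_cat k u :
  all (fun p => 0 < p) u -> sorted leq (nseq k 1 ++ u) = sorted leq u.
Proof.
move=> u_gt0; elim: k => //= k <-.
by rewrite path_min_sorted // all_cat u_gt0 all_nseq orbT.
Qed.

Lemma is_partition_glue k t : is_partition (k + (sumn t).*2) (nseq k 1 ++ map double t) =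
  is_partition (sumn t) t.
Proof.
rewrite /is_partition sumn_cat sumn_nseq mul1n sumn_map_double !eqxx !andbT.
have map_double_gt0 : all (fun p => 0 < p) (map double t) = all (fun p => 0 < p) t.
  by rewrite all_map; apply: eq_all => x; rewrite /= double_gt0.
rewrite all_cat all_nseq orbT map_double_gt0 /=.
case t_gt0: (all _ t); rewrite ?andbF // sorted_ones_cat ?map_double_gt0 // sorted_map.
by case: t {t_gt0 map_double_gt0} => //= x t; rewrite !andbT; apply: eq_path; exact: leq_double.
Qed.

Lemma all_pow2_glue k t : all is_pow2 (nseq k 1 ++ map double t) = all is_pow2 t.
Proof.
rewrite all_cat all_nseq orbT all_map; apply: eq_all => x; exact: is_pow2_double.
Qed.

Lemma count_mem1_glue k t : count_mem 1 (nseq k 1 ++ map double t) = k.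
Proof.
rewrite count_cat count_nseq mul1n count_map -[RHS]addn0; congr addn.
apply/eqP; rewrite -leqn0 leqNgt -has_count.
by apply/hasP => -[x _] /= /eqP/(congr1 odd); rewrite odd_double.
Qed.

Lemma top_halved_glue k t : all (fun p => 0 < p) t -> all is_pow2 t -> (0 < k) || (t != [::]) ->
  top_halved (nseq k 1 ++ map double t) = top_halved t && ((0 < k) || (1 < last 0 t)).
Proof.
rewrite /top_halved; case: t => [_ _ /= k_gt0|y t' t_gt0 t_pow2 _].
  rewrite cats0 k_gt0; have := mem_last 0 (nseq k 1); rewrite in_cons mem_nseq.
  by case/orP=> [|/andP[_]] /eqP ->.
set t := y :: t'; set L := last 0 t.
have L_t : L \in t by rewrite /L /t /= mem_last.
have L_gt0 : 0 < L by apply: (allP t_gt0).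
rewrite last_cat; have -> : last (last 0 (nseq k 1)) (map double t) = L.*2 by rewrite /= last_map.
have -> : L.*2 <= 1 = false by apply/negbTE; rewrite -ltnNge; lia.
rewrite doubleK mem_cat mem_nseq.
have [L1|L_gt1] := eqVneq L 1.
  have one_double : 1 \in map double t = false.
    by apply/mapP => -[x _ /(congr1 odd)]; rewrite odd_double.
  by rewrite L1 one_double andbT orbF.
have L_even : L = (L./2).*2 by rewrite even_halfK // is_pow2_even ?(allP t_pow2) //; lia.
have {}L_gt1 : 1 < L by lia.
rewrite andbF {1}L_even mem_map; last exact: double_inj.
by rewrite leqNgt L_gt1 orbT andbT.
Qed.

Lemma pow2_special_glue k t : 0 < k + (sumn t).*2 ->
  pow2_special (k + (sumn t).*2) (nseq k 1 ++ map double t) =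
  pow2_special (sumn t) t && ((0 < k) || (1 < last 0 t)).
Proof.
move=> n_gt0; rewrite !pow2_specialE is_partition_glue all_pow2_glue.
case t_part: (is_partition _ t); case t_pow2: (all is_pow2 t) => //=.
have /and3P[_ t_gt0 _] := t_part; rewrite top_halved_glue //.
by case: t n_gt0 {t_part t_pow2 t_gt0} => [|? ?]; rewrite /= ?addn0 ?orbF ?orbT // => ->.
Qed.

Lemma sorted_ones_split s : sorted leq s -> all (fun p => 0 < p) s ->
  s = nseq (count_mem 1 s) 1 ++ [seq x <- s | 1 < x].
Proof.
elim: s => //= x s IH x_path /andP[x_gt0 s_gt0].
have s_sorted := path_sorted x_path.
have [->|x_neq1] := eqVneq x 1; first by rewrite /= add0n {1}(IH s_sorted s_gt0).
have x_gt1 : 1 < x by lia.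
have s_ge : all (leq x) s := order_path_min leq_trans x_path.
rewrite x_gt1 add0n (_ : count_mem 1 s = 0).
  by congr cons; apply/esym/all_filterP/allP => y /(allP s_ge); lia.
apply/eqP; rewrite -leqn0 leqNgt -has_count; apply/hasP => -[y /(allP s_ge)].
by rewrite /=; lia.
Qed.

Lemma pow2_partition_split s : sorted leq s -> all (fun p => 0 < p) s -> all is_pow2 s ->
  s = nseq (count_mem 1 s) 1 ++ map double (map half [seq x <- s | 1 < x]).
Proof.
move=> s_sorted s_gt0 s_pow2; rewrite {1}(sorted_ones_split s_sorted s_gt0); congr cat.
rewrite -map_comp map_id_in // => x; rewrite mem_filter => /andP[x_gt1 x_s] /=.
by rewrite even_halfK // is_pow2_even ?(allP s_pow2).
Qed.

Lemma pow2_special_rec n : 0 < n -> num_partitions pow2_special n =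
  \sum_(m < n./2.+1) num_partitions pow2_special m - ~~ odd n.
Proof.
move=> n_gt0.
have keep_glue t : (sumn t).*2 <= n -> is_partition (sumn t) t ->
    ((0 < n - (sumn t).*2) || (1 < last 0 t)) = (((sumn t).*2 < n) || (t != nseq n./2 1)).
  move=> t_le t_part; rewrite subn_gt0; case: (ltnP (sumn t).*2 n) => //= t_ge.
  by rewrite (_ : n./2 = sumn t) ?partition_ones // -?ltnNge //; lia.
apply: (num_partitions_halving (glue := fun t => nseq (n - (sumn t).*2) 1 ++ map double t)
                               (excl := nseq n./2 1)).
- by move=> m s /and3P[].
- move=> _; rewrite /pow2_special /is_partition -[nseq _ 1]cats0 sorted_ones_cat // cats0.
  by rewrite !all_nseq sumn_nseq mul1n eqxx !orbT.
- move=> t t' /[dup] /(congr1 (count_mem 1)); rewrite !count_mem1_glue => ->.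
  by move/eqP; rewrite eqseq_cat // eqxx => /eqP/(inj_map double_inj).
- move=> t t_le t_special keep_t; have /and3P[t_part _ _] := t_special.
  by rewrite -{1}(subnK t_le) pow2_special_glue ?subnK // t_special keep_glue.
move=> s s_special; have /and3P[/and3P[s_sorted s_gt0 /eqP s_sum] s_pow2 _] := s_special.
set t := map half [seq x <- s | 1 < x].
have s_split := pow2_partition_split s_sorted s_gt0 s_pow2.
have n_split : n = count_mem 1 s + (sumn t).*2.
  by rewrite -s_sum {1}s_split sumn_cat sumn_nseq mul1n sumn_map_double.
have : pow2_special (count_mem 1 s + (sumn t).*2) (nseq (count_mem 1 s) 1 ++ map double t).
  by rewrite -n_split -s_split.
rewrite pow2_special_glue -?n_split // => /andP[t_special keep_t].
have /and3P[t_part _ _] := t_special.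
have t_le : (sumn t).*2 <= n by rewrite n_split leq_addl.
exists t; last by rewrite {1}s_split {1}n_split addnK.
by rewrite t_le t_special -keep_glue // {1}n_split addnK.
Qed.

Theorem mainTheorem4 (n : nat) :
  b n = num_partitions pow2_special n.
Proof.
elim/ltn_ind: n => n IH; have [-> //|n_gt0] := posnP n.
rewrite b_rec // pow2_special_rec //; congr (_ - _); apply: eq_bigr => m _.
by apply: IH; have := ltn_ord m; lia.
Qed.
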